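(* For the torsion-free cotorsion-free connections of the discrete torus model with frame group $\mathbb{Z}_4$ and universal calculus (parametrised by $a,b$ as in the context), the Ricci scalar is \[R=\partial^1b+\partial^2a+(\bar\partial^2\Theta_1)R_1b+(\bar\partial^1\Theta_2)R_2a-2bR_1b-2aR_2a.\]
   Context: Discrete torus model: $\Sigma=\mathbb{Z}_2\times\mathbb{Z}_2$, $x\to y$ iff $y-x\in\{(1,0),(0,1)\}$; diagonal zweibein $e_{1,x,x+(1,0)}=\Theta_1(x)^{-1}$, $e_{2,x,x+(0,1)}=\Theta_2(x)^{-1}$, $\Theta_a$ nowhere-vanishing with $\Theta_1R_1\Theta_2=\Theta_2R_2\Theta_1$; $R_1f(x)=f(x+(1,0))$, $R_2f(x)=f(x+(0,1))$, $\bar\partial^a=R_a-\mathrm{id}$, $\partial^a=\Theta_a\bar\partial^a$; $e_af=R_a(f)e_a$, $\mathrm{d}f=\sum_a(\partial^af)e_a$; two-forms $e_1\wedge e_2=-e_2\wedge e_1$, $e_a\wedge e_a=0$, $\mathrm{d}e_1=(\bar\partial^1\Theta_2)e_1\wedge e_2$, $\mathrm{d}e_2=-(\bar\partial^2\Theta_1)e_1\wedge e_2$; lift $\iota(e_1\wedge e_2)=\frac12(e_1\otimes e_2-e_2\otimes e_1)$; metric $\eta=e_1\otimes e_1+e_2\otimes e_2$. Frame group $\mathbb{Z}_4$ acting by quarter rotations ($\bar1$: $e_1\mapsto e_2,e_2\mapsto-e_1$), universal calculus $\mathcal C=\{\bar1,\bar2,\bar3\}$, $f^i=i-\bar0$.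 The torsion-free ($\mathrm{d}e_a+\sum_iA_i\wedge f^i\triangleright e_a=0$) and cotorsion-free ($\mathrm{d}e_a+\sum_i(f^{-i}\triangleright e_a)\wedge A_i=0$) connections are $A_{\bar1}=\alpha e_1+\beta e_2$, $A_{\bar3}=\gamma e_1+\delta e_2$, $A_{\bar2}=\frac12(-\alpha+\beta-\gamma-\delta-\bar\partial^2\Theta_1)e_1+\frac12(-\alpha-\beta+\gamma-\delta-\bar\partial^1\Theta_2)e_2$ with $a=\gamma-\alpha$, $b=\beta-\delta$ satisfying $(R_1+R_2)a=(R_1+R_2)b=0$. Curvature $F_i=\mathrm{d}A_i+\sum_{j+k=i}A_j\wedge A_k-(A_i\wedge A+A\wedge A_i)$, $A=\sum_jA_j$ ($j,k\in\mathcal C$). With $\iota(F_i)=\sum\iota(F_i)^{ab}e_a\otimes e_b$, $\mathrm{Ricci}=\sum_{i,a,b}\iota(F_i)^{ab}e_b\otimes f^i\triangleright e_a=\sum R_{ab}e_a\otimes e_b$, and the Ricci scalar is $R=R_{11}+R_{22}$. *)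

From HB Require Import structures.
From mathcomp Require Import all_boot all_order all_algebra.
Set Implicit Arguments. Unset Strict Implicit. Unset Printing Implicit Defensive.
Import Order.TTheory GRing.Theory Num.Theory.
Local Open Scope ring_scope.

Section Torus.
Variable R : numFieldType.

Definition pt := ('Z_2 * 'Z_2)%type.
(* frame indices: (0 : 'I_2) stands for e_1, (1 : 'I_2) for e_2 *)
Definition shift (a : 'I_2) (x : pt) : pt :=
  if a == 0 then (x.1 + 1, x.2) else (x.1, x.2 + 1).

Definition Rsh (a : 'I_2) (f : pt -> R) : pt -> R := fun x => f (shift a x).
Definition dbar (a : 'I_2) (f : pt -> R) : pt -> R := fun x => f (shift a x) - f x.

Variables Th1 Th2 : pt -> R.
Definition Th (a : 'I_2) : pt -> R := if a == 0 then Th1 else Th2.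
Definition del (a : 'I_2) (f : pt -> R) : pt -> R := fun x => Th a x * dbar a f x.

(* one-forms: u = sum_a u_a e_a (left coefficients) *)
Definition form1 := 'I_2 -> pt -> R.
(* two-forms: phi e_1 /\ e_2 *)
Definition form2 := pt -> R.
(* tensors in Omega^1 (x) Omega^1: sum_{a,b} T_{ab} e_a (x) e_b *)
Definition tensor := 'I_2 -> 'I_2 -> pt -> R.

Definition e (a : 'I_2) : form1 := fun b _ => if b == a then 1 else 0.
Definition scal (g : pt -> R) (u : form1) : form1 := fun b x => g x * u b x.

(* e_a /\ e_b = eps a b e_1 /\ e_2 *)
Definition eps (a b : 'I_2) : R :=
  if (a == 0) && (b == 1) then 1 else if (a == 1) && (b == 0) then -1 else 0.

(* (f e_a) /\ (g e_b) = f R_a(g) e_a /\ e_b *)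
Definition wedge (u v : form1) : form2 :=
  fun x => \sum_(a < 2) \sum_(b < 2) u a x * v b (shift a x) * eps a b.
(* (f e_a) (x) (g e_b) = f R_a(g) e_a (x) e_b *)
Definition tens (u v : form1) : tensor :=
  fun a b x => u a x * v b (shift a x).

Definition d0 (f : pt -> R) : form1 := fun a => del a f.
Definition de (a : 'I_2) : form2 :=
  if a == 0 then dbar 0 Th2 else fun x => - dbar 1 Th1 x.
Definition d1 (u : form1) : form2 :=
  fun x => \sum_(a < 2) (wedge (d0 (u a)) (e a) x + u a x * de a x).

(* the generator 1 of Z_4 acts by e_1 |-> e_2, e_2 |-> -e_1 (left-linearly) *)
Definition rot1 (u : form1) : form1 :=
  fun b x => if b == 0 then - u 1 x else u 0 x.
Definition act (i : 'Z_4) (u : form1) : form1 := iter (val i) rot1 u.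
(* f^i |> u, where f^i = i - 0 in the group algebra *)
Definition fact (i : 'Z_4) (u : form1) : form1 := fun b x => act i u b x - u b x.

(* a connection: A_i for i in C = {1,2,3} (the value A 0 is never used) *)
Definition connection := 'Z_4 -> form1.

Definition torsion_free (A : connection) : Prop :=
  forall (a : 'I_2) (x : pt),
    de a x + \sum_(i : 'Z_4 | i != 0) wedge (A i) (fact i (e a)) x = 0.
Definition cotorsion_free (A : connection) : Prop :=
  forall (a : 'I_2) (x : pt),
    de a x + \sum_(i : 'Z_4 | i != 0) wedge (fact (- i) (e a)) (A i) x = 0.

Definition Atot (A : connection) : form1 :=
  fun b x => \sum_(j : 'Z_4 | j != 0) A j b x.

Definition curv (A : connection) (i : 'Z_4) : form2 :=
  fun x => d1 (A i) x
    + \sum_(j : 'Z_4 | j != 0) \sum_(k : 'Z_4 | (k != 0) && (j + k == i))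
        wedge (A j) (A k) x
    - (wedge (A i) (Atot A) x + wedge (Atot A) (A i) x).

Definition iota (phi : form2) : tensor := fun a b x => phi x / 2 * eps a b.

Definition ricci (A : connection) : tensor :=
  fun c d x => \sum_(i : 'Z_4 | i != 0) \sum_(a < 2) \sum_(b < 2)
    tens (scal (iota (curv A i) a b) (e b)) (fact i (e a)) c d x.

Definition ricci_scalar (A : connection) : pt -> R :=
  fun x => ricci A 0 0 x + ricci A 1 1 x.

End Torus.

From Pilot Require Import Defs.
From HB Require Import structures.
From mathcomp Require Import all_boot all_order all_algebra ring.
Import Order.TTheory GRing.Theory Num.Theory.
Local Open Scope ring_scope.

(* The torsion equations at a point are linear in the components of A_2 there
   and determine A_2 from A_1, A_3 and the differences of Theta; with A_2
   eliminated, the cotorsion equations reduce to (R_1 + R_2) a = 0 and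
   (R_1 + R_2) b = 0.  Contracting the curvature gives R = F_1 - F_3.  Writing
   A_3 = A_1 + a e_1 - b e_2, all components of A_1 cancel in F_1 - F_3, and
   the relations a(x + (1,0)) = - a(x + (0,1)), b(x + (0,1)) = - b(x + (1,0))
   bring the remainder to the stated form. *)

Arguments shift : simpl never.

Lemma shiftK (a : 'I_2) : involutive (shift a).
Proof.
have addZ2K (t : 'Z_2) : t + 1 + 1 = t.
  by rewrite -addrA (_ : 1 + 1 = 0) ?addr0 //; exact: val_inj.
by case=> y1 y2; rewrite /shift; case: (a == 0); rewrite /= addZ2K.
Qed.

Lemma shiftC (y : pt) : shift 1 (shift 0 y) = shift 0 (shift 1 y).
Proof. by case: y. Qed.

Lemma big_ord2 (R : zmodType) (F : 'I_2 -> R) : \sum_(i < 2) F i = F 0 + F 1.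
Proof. by rewrite !big_ord_recl big_ord0 addr0; congr (F _ + F _); exact: val_inj. Qed.

Lemma big_Z4_neq0 (R : zmodType) (F : 'Z_4 -> R) :
  \sum_(i : 'Z_4 | i != 0) F i = F 1 + F 2 + F 3.
Proof.
rewrite big_mkcond /= !big_ord_recl big_ord0 /= add0r addr0 addrA.
by congr (F _ + F _ + F _); exact: val_inj.
Qed.

Lemma eq_of_subr_mul0 {F : pzRingType} (c : F) {h u v : F} :
  h = 0 -> u - v = c * h -> u = v.
Proof. by move=> -> /eqP; rewrite mulr0 subr_eq0 => /eqP. Qed.

Section Torus.
Context {R : numFieldType} {Th1 Th2 : pt -> R}.

Definition conn_a (A : connection R) (y : pt) : R := A 3 0 y - A 1 0 y.
Definition conn_b (A : connection R) (y : pt) : R := A 1 1 y - A 3 1 y.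

Lemma ricci_scalarE (A : connection R) (x : pt) :
  ricci_scalar Th1 Th2 A x = curv Th1 Th2 A 1 x - curv Th1 Th2 A 3 x.
Proof.
rewrite /ricci_scalar /ricci /tens /scal /Defs.iota /fact /act /rot1 /e /eps.
by rewrite !big_Z4_neq0 !big_ord2 /=; field.
Qed.

Lemma torsion_free_A2 {A : connection R} : torsion_free Th1 Th2 A ->
  (forall y, A 2 0 y = (- A 1 0 y + A 1 1 y - A 3 0 y - A 3 1 y - dbar 1 Th1 y) / 2) /\
  (forall y, A 2 1 y = (- A 1 0 y - A 1 1 y + A 3 0 y - A 3 1 y - dbar 0 Th2 y) / 2).
Proof.
move=> tfA; split=> y; [have := tfA 1 y | have := tfA 0 y];
  rewrite /de /wedge /fact /act /rot1 /e /eps !big_Z4_neq0 !big_ord2 /= => tfAy.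
- by apply: (eq_of_subr_mul0 (-1/2) tfAy); field.
- by apply: (eq_of_subr_mul0 (1/2) tfAy); field.
Qed.

Lemma cotorsion_free_Rsh_sum {A : connection R} :
  torsion_free Th1 Th2 A -> cotorsion_free Th1 Th2 A ->
  (forall y, Rsh 0 (conn_a A) y + Rsh 1 (conn_a A) y = 0) /\
  (forall y, Rsh 0 (conn_b A) y + Rsh 1 (conn_b A) y = 0).
Proof.
move=> /torsion_free_A2[A20 A21] ctfA; split=> y; [have := ctfA 0 y | have := ctfA 1 y];
  rewrite /de /wedge /fact /act /rot1 /e /eps !big_Z4_neq0 !big_ord2 /= ?A20 ?A21;
  rewrite /dbar /Rsh /conn_a /conn_b ?shiftK => ctfAy.
- by apply: (eq_of_subr_mul0 (-1) ctfAy); field.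
- by apply: (eq_of_subr_mul0 1 ctfAy); field.
Qed.

Lemma ricci_scalar_conn {A : connection R} {x : pt} :
  torsion_free Th1 Th2 A ->
  Rsh 0 (conn_a A) x + Rsh 1 (conn_a A) x = 0 ->
  Rsh 0 (conn_b A) x + Rsh 1 (conn_b A) x = 0 ->
  ricci_scalar Th1 Th2 A x =
    del Th1 Th2 0 (conn_b A) x + del Th1 Th2 1 (conn_a A) x
    + dbar 1 Th1 x * Rsh 0 (conn_b A) x + dbar 0 Th2 x * Rsh 1 (conn_a A) x
    - 2 * conn_b A x * Rsh 0 (conn_b A) x - 2 * conn_a A x * Rsh 1 (conn_a A) x.
Proof.
move=> /torsion_free_A2[A20 A21] /eqP a_sum0 /eqP b_sum0.
have /eqP a0 : conn_a A (shift 0 x) == - conn_a A (shift 1 x) by rewrite -addr_eq0.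
have /eqP b1 : conn_b A (shift 1 x) == - conn_b A (shift 0 x) by rewrite -addr_eq0 addrC.
have A30 y : A 3 0 y = A 1 0 y + conn_a A y by rewrite /conn_a addrC subrK.
have A31 y : A 3 1 y = A 1 1 y - conn_b A y by rewrite /conn_b opprB addrC subrK.
rewrite ricci_scalarE /curv /Atot /d1 /d0 /del /wedge /de /e /eps.
rewrite !big_Z4_neq0 !big_mkcondr !big_Z4_neq0 !big_ord2 /= !big_Z4_neq0.
rewrite /Th /dbar /Rsh /= !A20 !A21 /dbar !A30 !A31 ?(shiftC, shiftK) a0 b1.
by field.
Qed.

End Torus.

Theorem proposition4p3 (R : numFieldType) (Th1 Th2 : pt -> R)
    (A : connection R) :
  (forall x, Th1 x != 0) -> (forall x, Th2 x != 0) ->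
  (forall x, Th1 x * Th2 (shift 0 x) = Th2 x * Th1 (shift 1 x)) ->
  torsion_free Th1 Th2 A -> cotorsion_free Th1 Th2 A ->
  let a : pt -> R := fun x => A 3 0 x - A 1 0 x in
  let b : pt -> R := fun x => A 1 1 x - A 3 1 x in
  forall x : pt,
    ricci_scalar Th1 Th2 A x =
      del Th1 Th2 0 b x + del Th1 Th2 1 a x
      + dbar 1 Th1 x * Rsh 0 b x + dbar 0 Th2 x * Rsh 1 a x
      - 2 * b x * Rsh 0 b x - 2 * a x * Rsh 1 a x.
Proof.
move=> _ _ _ tfA ctfA a b x.
have [a_sum0 b_sum0] := cotorsion_free_Rsh_sum tfA ctfA.
exact: ricci_scalar_conn tfA (a_sum0 x) (b_sum0 x).
Qed.
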